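(* Let $\mathbb{K}\in\{\mathbb{R},\mathbb{C}\}$. Suppose $U=[U_1\ \cdots\ U_M]$, where each $U_i$ is a submatrix whose columns come from $S_i$, with $S_1,\dots,S_M$ independent subspaces of $\mathbb{K}^m$, and the columns of $U_i$ are generic for $S_i$. Suppose $P\in\mathbb{K}^{r\times m}$ with $r\ge\operatorname{rank}(U)$ is a row selection matrix such that $\operatorname{rank}(PU)=\operatorname{rank}(U)$. Then the subspaces $P(S_1),\dots,P(S_M)$ are independent.
   Context: Subspaces $S_1,\dots,S_M$ are independent if $\dim(S_1+\dots+S_M)=\dim S_1+\dots+\dim S_M$ (and this is at most the ambient dimension). A set of vectors from a $d$-dimensional subspace $S$ is generic if it has more than $d$ elements and every $d$ of them form a basis of $S$. A row selection matrix is a matrix whose rows are distinct standard basis row vectors, so that $PU$ consists of a subset of the rows of $U$. *)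

From HB Require Import structures.
From mathcomp Require Import all_boot all_order all_algebra.
Set Implicit Arguments. Unset Strict Implicit. Unset Printing Implicit Defensive.
Import GRing.Theory.
Local Open Scope ring_scope.

(* Convention: a subspace of K^n is represented (as in mxalgebra) by the row
   space of a matrix with n columns; a vector of K^n is a row vector 'rV_n.
   The columns of a matrix U are the vectors (col j U)^T. *)

Definition subspaces_independent (K : fieldType) (M p n : nat)
  (S : 'I_M -> 'M[K]_(p, n)) : Prop :=
  \rank (\sum_(i < M) <<S i>>)%MS = (\sum_(i < M) \rank (S i))%N.

Definition generic_cols (K : fieldType) (m k : nat)
  (A : 'M[K]_(m, k)) (S : 'M[K]_m) : Prop :=
  [/\ forall j : 'I_k, ((col j A)^T <= S)%MS,
      (\rank S < k)%N &
      forall f : 'I_(\rank S) -> 'I_k, injective f ->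
        (((colsub f A)^T == S)%MS && row_free (colsub f A)^T)].

Definition row_selection (K : fieldType) (r m : nat) (P : 'M[K]_(r, m)) : Prop :=
  (forall i : 'I_r, exists j : 'I_m, row i P = delta_mx 0 j) /\
  injective (fun i : 'I_r => row i P).

From HB Require Import structures.
From mathcomp Require Import all_boot all_order all_algebra.
Import GRing.Theory.
Local Open Scope ring_scope.

(* Genericity is only used to see that the columns of U_i span S_i, so that
   the columns of U span S_1 + ... + S_M.  Then rank (P U) = rank U says that
   P is injective on this sum; an injective linear map preserves the dimension
   of the sum, and since dim P(S_i) <= dim S_i always, the dimension count
   dim (P S_1 + ... + P S_M) = sum_i dim P(S_i) is forced. *)

Section IndependentImages.

Variable K : fieldType.

Lemma generic_cols_eqmx (m k : nat) (A : 'M[K]_(m, k)) (S : 'M[K]_m) :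
  generic_cols A S -> (A^T :=: S)%MS.
Proof.
case=> A_sub_S rankS_lt_k basis_of_cols; apply/eqmxP/andP; split.
  by apply/row_subP => j; rewrite -tr_col.
pose f := widen_ord (ltnW rankS_lt_k).
have inj_f : injective f by move=> a b /(congr1 val) ab; apply: val_inj.
have /andP[/andP[_ S_sub] _] := basis_of_cols f inj_f.
apply: submx_trans S_sub _.
have -> : (colsub f A)^T = rowsub f A^T by apply/matrixP => i j; rewrite !mxE.
exact: rowsub_sub.
Qed.

Lemma mxrank_sum_genmx_leq (M p n : nat) (A : 'I_M -> 'M[K]_(p, n)) :
  (\rank (\sum_(i < M) <<A i>>)%MS <= \sum_(i < M) \rank (A i))%N.
Proof.
under [X in (_ <= X)%N]eq_bigr do rewrite -genmxE.
exact: (mxrank_sum_leqif _).1.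
Qed.

Lemma tr_mxrow_eqmx_sum (M m : nat) (n : 'I_M -> nat)
    (U : forall i, 'M[K]_(m, n i)) (S : 'I_M -> 'M[K]_m) :
    (forall i, ((U i)^T :=: S i)%MS) ->
  ((\mxrow_(i < M) U i)^T :=: \sum_(i < M) <<S i>>)%MS.
Proof.
move=> US; rewrite tr_mxrow; apply: eqmx_trans (eqmx_col _) _.
under eq_bigr do rewrite (eq_genmx (US _)).
exact: eqmx_refl.
Qed.

Lemma subspaces_independent_mulmx (M p n q : nat) (S : 'I_M -> 'M[K]_(p, n))
    (B : 'M[K]_(n, q)) :
    subspaces_independent S ->
    \rank ((\sum_(i < M) <<S i>>)%MS *m B) = \rank (\sum_(i < M) <<S i>>)%MS ->
  subspaces_independent (fun i => S i *m B).
Proof.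
rewrite /subspaces_independent => indS rank_sumSB.
have sum_imageE : (\sum_(i < M) <<S i *m B>> :=:
                   (\sum_(i < M) <<S i>>)%MS *m B)%MS.
  apply: eqmx_sym; apply: eqmx_trans (sumsmxMr_gen _ _ _) _.
  apply: eqmx_sums => i _; rewrite (eq_genmx (eqmxMr B (genmxE (S i)))).
  exact: eqmx_refl.
apply/eqP; rewrite eqn_leq mxrank_sum_genmx_leq /=.
rewrite sum_imageE rank_sumSB indS.
by apply: leq_sum => i _; apply: mxrankM_maxl.
Qed.

End IndependentImages.

Theorem lemma3 (K : fieldType) (m M r : nat) (S : 'I_M -> 'M[K]_m)
  (n : 'I_M -> nat) (Ui : forall i : 'I_M, 'M[K]_(m, n i))
  (P : 'M[K]_(r, m)) :
  subspaces_independent S ->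
  (forall i : 'I_M, generic_cols (Ui i) (S i)) ->
  row_selection P ->
  (\rank (\mxrow_(i < M) Ui i) <= r)%N ->
  \rank (P *m \mxrow_(i < M) Ui i) = \rank (\mxrow_(i < M) Ui i) ->
  subspaces_independent (fun i : 'I_M => S i *m P^T).
Proof.
move=> indS genU _ _ rankPU.
set U := \mxrow_(i < M) Ui i in rankPU.
have UE : (U^T :=: \sum_(i < M) <<S i>>)%MS.
  by apply: tr_mxrow_eqmx_sum => i; apply: generic_cols_eqmx.
apply: subspaces_independent_mulmx => //.
by rewrite -(eqmxMr _ UE) -UE -trmx_mul !mxrank_tr.
Qed.
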